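(* Let $(G,N,\vartheta)$ and $(H,M,\varphi)$ be character triples of finite groups with $(G,N,\vartheta)\geq_c(H,M,\varphi)$, and let $C\leq\mathbf{C}_G(N)$. Let $\nu\in\mathrm{Irr}(C\cap N)$ be the unique irreducible constituent of $\vartheta_{C\cap N}$, which is also the unique irreducible constituent of $\varphi_{C\cap N}$. Then $$\left(\mathbf{N}_G(C)_{\vartheta\cdot\psi},N\cdot C,\vartheta\cdot\psi\right)\geq_c\left(\mathbf{N}_H(C)_{\varphi\cdot\psi},M\cdot C,\varphi\cdot\psi\right)$$ for every $\psi\in\mathrm{Irr}(C\mid\nu)$.
   Context: Central products: since $C$ centralizes $N$ (and hence $M$), $NC$ and $MC$ are central products, written $N\cdot C$ and $M\cdot C$. For $\vartheta\in\mathrm{Irr}(N)$ and $\psi\in\mathrm{Irr}(C)$ lying over the same character $\nu$ of $N\cap C$, $\vartheta\cdot\psi$ denotes the unique irreducible character of $N\cdot C$ with $(\vartheta\cdot\psi)(nc)=\vartheta(n)\psi(c)$ for $n\in N$, $c\in C$ (similarly $\varphi\cdot\psi$ on $M\cdot C$). Subscripts denote stabilizers; $\mathrm{Irr}(C\mid\nu)$ is the set of irreducible characters of $C$ lying over $\nu$. Character triples and $\geq_c$: a character triple $(G,N,\vartheta)$ consists of $N\trianglelefteq G$ and a $G$-invariant $\vartheta\in\mathrm{Irr}(N)$. A projective representation of $G$ associated with $\vartheta$ is a map $\mathcal{P}:G\to\mathrm{GL}_{\vartheta(1)}(\mathbb{C})$ with $\mathcal{P}(x)\mathcal{P}(y)=\alpha(x,y)\mathcal{P}(xy)$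 for a factor set $\alpha$, such that $\mathcal{P}|_N$ is a representation affording $\vartheta$ and $\mathcal{P}(xn)=\mathcal{P}(x)\mathcal{P}(n)$, $\mathcal{P}(nx)=\mathcal{P}(n)\mathcal{P}(x)$ for $x\in G,n\in N$. One writes $(G,N,\vartheta)\geq_c(H,M,\varphi)$ for character triples if $G=NH$, $M=N\cap H$, $\mathbf{C}_G(N)\leq H$, and there are projective representations $\mathcal{P}$ of $G$ associated with $\vartheta$ and $\mathcal{P}'$ of $H$ associated with $\varphi$, with factor sets $\alpha,\alpha'$, such that $\alpha|_{H\times H}=\alpha'$ and for every $c\in\mathbf{C}_G(N)$ the matrices $\mathcal{P}(c)$, $\mathcal{P}'(c)$ are scalar with the same scalar. *)

From mathcomp Require Import all_boot all_order all_algebra all_fingroup all_solvable all_field all_character.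
Set Implicit Arguments. Unset Strict Implicit. Unset Printing Implicit Defensive.
Import GRing.Theory Num.Theory.
Local Open Scope group_scope.
Local Open Scope ring_scope.

Section Defs.
Variable gT : finGroupType.

Definition char_triple (G N : {group gT}) (theta : 'CF(N)) : Prop :=
  [/\ N <| G, theta \in irr N & G \subset 'I[theta]].

Definition proj_repr_assoc (G N : {group gT}) (theta : 'CF(N)) (n : nat)
    (P : gT -> 'M[algC]_n) (alpha : gT -> gT -> algC) : Prop :=
  [/\ forall x, x \in G -> P x \in unitmx,
      forall x y, x \in G -> y \in G ->
        alpha x y != 0 /\ P x *m P y = alpha x y *: P (x * y)%g,
      mx_repr N P,
      forall m, m \in N -> \tr (P m) = theta m &
      forall x m, x \in G -> m \in N ->
        P (x * m)%g = P x *m P m /\ P (m * x)%g = P m *m P x].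

Definition triple_geq_c (G N : {group gT}) (theta : 'CF(N))
    (H M : {group gT}) (phi : 'CF(M)) : Prop :=
  [/\ @char_triple G N theta, @char_triple H M phi,
      (N * H)%g = G :> {set gT}, M :=: N :&: H /\ 'C_G(N) \subset H &
      exists (n m : nat) (P : gT -> 'M[algC]_n) (P' : gT -> 'M[algC]_m)
             (alpha alpha' : gT -> gT -> algC),
        [/\ @proj_repr_assoc G N theta n P alpha,
            @proj_repr_assoc H M phi m P' alpha',
            (forall x y, x \in H -> y \in H -> alpha x y = alpha' x y) &
            forall c, c \in 'C_G(N) ->
              exists z : algC, P c = z%:M /\ P' c = z%:M]].

End Defs.

Arguments char_triple {gT} G N theta.
Arguments proj_repr_assoc {gT} G N theta n P alpha.
Arguments triple_geq_c {gT} G N theta H M phi.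

(* Let X afford psi. As K = I_{N_G(C)}(theta.psi) = G :&: I(psi) normalises C
   and fixes psi, Clifford's construction extends X to a projective
   representation Q of K. Then P (x) Q is a projective representation of K
   which on L = N C agrees, up to a nonzero scalar function, with the
   representation P|_N (x) X affording theta.psi; rescaling it on each coset xL
   through a representative t(x) chosen in K' = H :&: I(psi) makes it
   associated with theta.psi. With the same Q and the same representatives on
   the H side, the rescaling factors on K' are given by one formula in
   alpha = alpha' and in the common scalars of P and P' on C, so the two factor
   sets agree on K', and on C_K(L) both representations are the same scalar. *)

From mathcomp Require Import all_boot all_order all_algebra all_fingroup all_solvable all_field all_character.
From mathcomp Require Import mxtens.
Set Implicit Arguments. Unset Strict Implicit. Unset Printing Implicit Defensive.
Import GRing.Theory Num.Theory.
Local Open Scope group_scope.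
Local Open Scope ring_scope.

Section TensorProduct.
Variable R : comPzRingType.

Lemma tensmxZl m n p q (a : R) (A : 'M[R]_(m, n)) (B : 'M[R]_(p, q)) :
  (a *: A) *t B = a *: (A *t B).
Proof. by apply/matrixP=> i j; rewrite !mxE mulrA. Qed.

Lemma tensmxZr m n p q (a : R) (A : 'M[R]_(m, n)) (B : 'M[R]_(p, q)) :
  A *t (a *: B) = a *: (A *t B).
Proof. by apply/matrixP=> i j; rewrite !mxE mulrCA. Qed.

Lemma tensmx_scalar m n (a b : R) :
  (a%:M : 'M[R]_m) *t (b%:M : 'M[R]_n) = (a * b)%:M.
Proof.
apply/matrixP=> i j.
case: (mxtens_indexP i) => i0 i1; case: (mxtens_indexP j) => j0 j1.
rewrite tensmxE [RHS]mxE !mxE (inj_eq (can_inj (@mxtens_indexK m n))) xpair_eqE.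
by case: (i0 == j0); case: (i1 == j1); rewrite ?mulr0 ?mul0r.
Qed.

Lemma mxtrace_tens m n (A : 'M[R]_m) (B : 'M[R]_n) : \tr (A *t B) = \tr A * \tr B.
Proof.
rewrite /mxtrace mulr_sum; apply: eq_bigr => i _.
by case: (mxtens_indexP i) => i0 i1; rewrite tensmxE mxtens_indexK.
Qed.

End TensorProduct.

Section ScalarOfMatrix.
Variable F : numFieldType.

Definition mx_scalar n (A : 'M[F]_n) := \tr A / n%:R.

Lemma mx_scalar_id n (a : F) : (0 < n)%N -> mx_scalar (a%:M : 'M_n) = a.
Proof.
by move=> n_gt0; rewrite /mx_scalar mxtrace_scalar -[a *+ n]mulr_natr mulfK // pnatr_eq0 -lt0n.
Qed.

Lemma mx_scalarP n (A : 'M[F]_n) : (0 < n)%N -> is_scalar_mx A -> A = (mx_scalar A)%:M.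
Proof. by move=> n_gt0 /is_scalar_mxP[a ->]; rewrite mx_scalar_id. Qed.

Lemma scalar_mx_inj n : (0 < n)%N -> injective (@scalar_mx F n).
Proof. by move=> n_gt0 a b eq_ab; rewrite -(mx_scalar_id a n_gt0) eq_ab mx_scalar_id. Qed.

Lemma scalar_unitmx_neq0 n (a : F) : (0 < n)%N -> (a%:M : 'M_n) \in unitmx -> a != 0.
Proof.
move=> n_gt0; apply: contraL => /eqP->; rewrite unitmxE det_scalar.
by case: n n_gt0 => // n _; rewrite expr0n /= unitr0.
Qed.

End ScalarOfMatrix.

Lemma constt_scale_irr (gT : finGroupType) (G : {group gT}) (a : algC) (j : Iirr G) :
  a != 0 -> irr_constt (a *: 'chi_j) =i pred1 j.
Proof.
move=> a_neq0 i; rewrite inE /= cfdotZl cfdot_irr inE.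
by case: (eqVneq i j) => _; rewrite ?mulr1 ?mulr0 ?eqxx.
Qed.

Lemma scalar_repr_lin_char (gT : finGroupType) (D : {group gT}) n
    (rD : mx_representation algC D n) (z : gT -> algC) :
  (0 < n)%N -> {in D, forall d, rD d = (z d)%:M} -> exists j : Iirr D, {in D, z =1 'chi_j}.
Proof.
move=> n_gt0 rDz.
have z1 : z 1%g = 1 by apply: (scalar_mx_inj n_gt0); rewrite -rDz ?repr_mx1.
pose r1 d := ((z d)%:M : 'M[algC]_1).
have r1P : mx_repr D r1.
  split=> [|x y Dx Dy]; first by rewrite /r1 z1.
  rewrite /r1 -scalar_mxM; congr _%:M; apply: (scalar_mx_inj n_gt0).
  by rewrite scalar_mxM -!rDz ?groupM // repr_mxM.
pose lam := cfRepr (MxRepresentation r1P).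
have lam_lin : lam \is a linear_char by rewrite qualifE/= cfRepr_char cfRepr1 eqxx.
have /irrP[j lamE] := lin_char_irr lam_lin.
by exists j => d Dd; rewrite -lamE cfunE Dd /= mxtrace_scalar mulr1n.
Qed.

Lemma scalar_repr_cfRes_constt (gT : finGroupType) (G D : {group gT}) n
    (rG : mx_representation algC G n) (z : gT -> algC) :
  D \subset G -> (0 < n)%N -> {in D, forall d, rG d = (z d)%:M} ->
  exists j : Iirr D, {in D, z =1 'chi_j} /\ irr_constt ('Res[D] (cfRepr rG)) =i pred1 j.
Proof.
move=> sDG n_gt0 rGz; have [j zj] := @scalar_repr_lin_char _ _ _ (subg_repr rG sDG) z n_gt0 rGz.
exists j; split=> //; suff -> : 'Res[D] (cfRepr rG) = n%:R *: 'chi_j.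
  by apply: constt_scale_irr; rewrite pnatr_eq0 -lt0n.
apply/cfun_inP=> d Dd; rewrite cfResE // cfunE (subsetP sDG) //= rGz //.
by rewrite mxtrace_scalar cfunE zj // mulr_natl.
Qed.

Section ProjReprAssoc.
Variables (gT : finGroupType) (G N : {group gT}) (theta : 'CF(N)) (n : nat).
Variables (P : gT -> 'M[algC]_n) (alpha : gT -> gT -> algC).
Hypothesis PA : proj_repr_assoc G N theta n P alpha.

Lemma proj_repr_assoc_dim_gt0 : theta \in irr N -> (0 < n)%N.
Proof.
case: PA => _ _ [P1 _] Ptr _ /irrP[i theta_i].
by have := irr1_neq0 i; rewrite -theta_i -Ptr // P1 mxtrace1 pnatr_eq0 lt0n.
Qed.

Lemma proj_repr_assoc_sub (K : {group gT}) :
  K \subset G -> proj_repr_assoc K N theta n P alpha.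
Proof.
case: PA => PU Pfactor PN Ptr PNmul /subsetP sKG.
split=> // [x Kx | x y Kx Ky | x a Kx Na].
- exact/PU/sKG.
- exact: Pfactor (sKG x Kx) (sKG y Ky).
- exact: PNmul (sKG x Kx) Na.
Qed.

End ProjReprAssoc.

Section ProjectiveExtension.
Variables (gT : finGroupType) (K C : {group gT}) (k : nat).
Variable X : mx_representation algC C k.
Hypotheses (Xirr : mx_absolutely_irreducible X) (sCK : C \subset K).
Hypothesis sKI : K \subset 'I[cfRepr X].

Let k_gt0 : (0 < k)%N. Proof. by case/mx_abs_irrP: Xirr. Qed.

Let nCK : K \subset 'N(C). Proof. exact: subset_trans sKI (norm_inertia _). Qed.

Lemma cent_repr_mx_scalar (A : 'M[algC]_k) :
  {in C, forall c, A *m X c = X c *m A} -> A = (mx_scalar A)%:M.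
Proof.
move=> cAX; apply: mx_scalarP k_gt0 _.
by apply: (mx_abs_irr_cent_scalar Xirr); apply/centgmxP.
Qed.

Lemma conjg_mx_repr r : r \in 'N(C) -> mx_repr C (fun c => X (c ^ r^-1)%g).
Proof.
move=> nCr; have nCr' : (r^-1)%g \in 'N(C) by rewrite groupV.
by split=> [|x y Cx Cy]; rewrite ?conj1g ?repr_mx1 // conjMg repr_mxM ?memJ_norm.
Qed.

(* Normalising Y_1 = 1 makes the extension below agree with X on C. *)
Definition intertwines r (Y : 'M[algC]_k) :=
  [&& Y \in unitmx, (r \in K) ==> [forall c in C, Y *m X (c ^ r)%g == X c *m Y]
    & (r == 1%g) ==> (Y == 1%:M)].

Lemma intertwiner_exists r : exists Y, intertwines r Y.
Proof.
have [-> | r_neq1] := eqVneq r 1%g.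
  exists 1%:M; rewrite /intertwines unitmx1 !eqxx implybT andbT /=.
  by apply/implyP=> _; apply/forall_inP=> c _; rewrite conjg1 mul1mx mulmx1.
have [Kr | K'r] := boolP (r \in K); last first.
  by exists 1%:M; rewrite /intertwines unitmx1 (negPf K'r) (negPf r_neq1).
have nCr : r \in 'N(C) by apply: (subsetP nCK).
have Ir : (r^-1)%g \in 'I[cfRepr X] by rewrite groupV (subsetP sKI).
have : cfRepr (MxRepresentation (conjg_mx_repr nCr)) == cfRepr X.
  apply/eqP/cfun_inP=> c Cc; have := inertia_valJ c Ir.
  by rewrite !cfunE memJ_norm ?groupV // Cc.
case/cfRepr_rsimP=> Y _ Yfree XrY; exists Y.
rewrite /intertwines -row_free_unit Yfree Kr (negPf r_neq1) andbT /=.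
apply/forall_inP=> c Cc; apply/eqP.
by rewrite -XrY ?memJ_norm //= conjgK.
Qed.

Definition intertwiner r := xchoose (intertwiner_exists r).

Lemma intertwinerP r : intertwines r (intertwiner r).
Proof. exact: xchooseP. Qed.

Lemma intertwiner_unit r : intertwiner r \in unitmx.
Proof. by case/and3P: (intertwinerP r). Qed.

Lemma intertwiner1 : intertwiner 1%g = 1%:M.
Proof. by case/and3P: (intertwinerP 1%g) => _ _; rewrite eqxx => /eqP. Qed.

Lemma intertwinerJ r c : r \in K -> c \in C ->
  intertwiner r *m X (c ^ r)%g = X c *m intertwiner r.
Proof.
case/and3P: (intertwinerP r) => _ /implyP YXr _ Kr Cc.
exact/eqP/(forall_inP (YXr Kr)).
Qed.

Definition proj_ext x := intertwiner (repr (x *: C)%g) *m X ((repr (x *: C)%g)^-1 * x)%g.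

Lemma repr_lcoset_inv_mul x : ((repr (x *: C)%g)^-1 * x)%g \in C.
Proof.
have := mem_repr x (lcoset_refl C x); rewrite mem_lcoset.
by rewrite -groupV invMg invgK.
Qed.

Lemma repr_lcoset_in x : x \in K -> repr (x *: C)%g \in K.
Proof.
move=> Kx; have Cr'x := repr_lcoset_inv_mul x; set r := repr _ in Cr'x *.
have -> : r = (x * (r^-1 * x)^-1)%g by rewrite invMg invgK mulKVg.
by rewrite groupM // groupV (subsetP sCK).
Qed.

Lemma proj_ext_unit x : proj_ext x \in unitmx.
Proof. by rewrite unitmx_mul intertwiner_unit repr_mx_unit ?repr_lcoset_inv_mul. Qed.

Lemma proj_ext1 : proj_ext 1%g = 1%:M.
Proof. by rewrite /proj_ext lcoset_id // repr_group intertwiner1 mulVg repr_mx1 mulmx1. Qed.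

Lemma proj_extMr x c : c \in C -> proj_ext (x * c)%g = proj_ext x *m X c.
Proof.
move=> Cc; rewrite /proj_ext lcosetM lcoset_id // -mulmxA -repr_mxM ?repr_lcoset_inv_mul //.
by rewrite mulgA.
Qed.

Lemma proj_extJ x c : x \in K -> c \in C -> proj_ext x *m X (c ^ x)%g = X c *m proj_ext x.
Proof.
move=> Kx Cc; rewrite /proj_ext; set r := repr (x *: C)%g.
have Kr : r \in K by apply: repr_lcoset_in.
have Cr'x : (r^-1 * x)%g \in C by apply: repr_lcoset_inv_mul.
have Ccr : (c ^ r)%g \in C by rewrite memJ_norm // (subsetP nCK).
rewrite -mulmxA -repr_mxM ?memJ_norm ?(subsetP nCK) //.
have -> : (r^-1 * x * c ^ x = c ^ r * (r^-1 * x))%g by rewrite !conjgE !mulgA !mulgK.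
by rewrite repr_mxM // !mulmxA intertwinerJ.
Qed.

Definition proj_ext_factor x y :=
  mx_scalar (invmx (proj_ext (x * y)%g) *m (proj_ext x *m proj_ext y)).

Lemma proj_ext_factorP x y : x \in K -> y \in K ->
  proj_ext_factor x y != 0 /\
  proj_ext x *m proj_ext y = proj_ext_factor x y *: proj_ext (x * y)%g.
Proof.
move=> Kx Ky; set B := invmx (proj_ext (x * y)%g) *m (proj_ext x *m proj_ext y).
have Kxy : (x * y)%g \in K by rewrite groupM.
have QxyB : proj_ext x *m proj_ext y = proj_ext (x * y)%g *m B.
  by rewrite [RHS]mulmxA mulmxV ?proj_ext_unit ?mul1mx.
have B_scalar : B = (mx_scalar B)%:M.
  apply: cent_repr_mx_scalar => d Cd.
  have [c Cc ->] : exists2 c, c \in C & d = (c ^ (x * y))%g.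
    by exists (d ^ (x * y)^-1)%g; rewrite ?conjgKV // memJ_norm ?groupV ?(subsetP nCK).
  have Ccx : (c ^ x)%g \in C by rewrite memJ_norm ?(subsetP nCK).
  apply: (can_inj (mulKmx (proj_ext_unit (x * y)%g))) => /=.
  rewrite [RHS]mulmxA (proj_extJ Kxy Cc) -[RHS]mulmxA -QxyB [RHS]mulmxA.
  by rewrite [LHS]mulmxA -QxyB conjgM -[LHS]mulmxA (proj_extJ Ky Ccx) [LHS]mulmxA (proj_extJ Kx Cc).
split; last by rewrite QxyB {1}B_scalar mul_mx_scalar.
apply: (scalar_unitmx_neq0 k_gt0).
by rewrite -B_scalar /B unitmx_mul unitmx_inv proj_ext_unit unitmx_mul !proj_ext_unit.
Qed.

Lemma proj_ext_cent_scalar x : x \in K -> x \in 'C(C) ->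
  proj_ext x = (mx_scalar (proj_ext x))%:M.
Proof.
move=> Kx cCx; apply: cent_repr_mx_scalar => c Cc.
have cxc : (c ^ x)%g = c by apply/conjg_fixP/commgP; exact: esym (centP cCx c Cc).
by rewrite -proj_extJ // cxc.
Qed.

End ProjectiveExtension.

Lemma inertia_central_product (gT : finGroupType) (G N C : {group gT})
    (theta : 'CF(N)) (psi : 'CF(C)) (tau : 'CF((N <*> C)%G)) :
  N <| G -> G \subset 'I[theta] -> theta 1%g != 0 -> C \subset 'C(N) ->
  {in N & C, forall a c, tau (a * c)%g = theta a * psi c} ->
  'I_('N_G(C))[tau] = G :&: 'I[psi].
Proof.
move=> nsNG sGI theta1 cNC tauE; apply/setP=> x; rewrite !in_setI.
have [Gx | //] := boolP (x \in G); have [nCx | nCx] /= := boolP (x \in 'N(C)); last first.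
  by rewrite /inertia in_set (negPf nCx).
have nNx : x \in 'N(N) by apply: (subsetP (normal_norm nsNG)).
have nLx : x \in 'N(N <*> C) by rewrite -sub1set normsY ?sub1set.
have nCx' : (x^-1)%g \in 'N(C) by rewrite groupV.
have tauC : {in C, forall c, tau c = theta 1%g * psi c}.
  by move=> c Cc; rewrite -(mul1g c) tauE // mul1g.
apply/idP/idP => /inertiaJ tau_x; apply/setIdP; split=> //; apply/eqP.
  apply/cfun_inP=> c Cc; move/cfunP/(_ c): tau_x.
  by rewrite !cfConjgE // !tauC ?memJ_norm //; apply: mulfI.
apply/cfun_inP=> l Ll; have : l \in (N * C)%g by rewrite -cent_joinEr.
case/mulsgP=> a c Na Cc ->.
have Ix' : (x^-1)%g \in 'I[theta] by rewrite groupV (subsetP sGI).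
rewrite cfConjgE // conjMg !tauE ?memJ_norm ?groupV // inertia_valJ //.
by rewrite -cfConjgE // tau_x.
Qed.

Section LcosetRepresentative.
Variables (gT : finGroupType) (T L : {group gT}).

Definition lcoset_rep x := repr (T :&: x *: L)%g.

Lemma lcoset_repMr x l : l \in L -> lcoset_rep (x * l)%g = lcoset_rep x.
Proof. by move=> Ll; rewrite /lcoset_rep lcosetM lcoset_id. Qed.

Lemma lcoset_rep1 : lcoset_rep 1%g = 1%g.
Proof. by rewrite /lcoset_rep lcoset_id // (repr_group (T :&: L)%G). Qed.

Lemma lcoset_repP x : x \in (T * L)%g ->
  lcoset_rep x \in T /\ ((lcoset_rep x)^-1 * x)%g \in L.
Proof.
case/mulsgP=> h l Th Ll ->.
have : h \in (T :&: (h * l) *: L)%g by rewrite inE Th mem_lcoset invMg mulgKV groupV.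
move/mem_repr; rewrite -/(lcoset_rep _) inE mem_lcoset => /andP[-> Lr].
by rewrite -groupV invMg invgK.
Qed.

End LcosetRepresentative.

Section TensorCorrection.
Variables (gT : finGroupType) (K N C : {group gT}) (n k : nat).
Variables (theta : 'CF(N)) (tau : 'CF((N <*> C)%G)).
Variables (P : gT -> 'M[algC]_n) (alpha : gT -> gT -> algC).
Variable X : mx_representation algC C k.
Variables (Q : gT -> 'M[algC]_k) (beta : gT -> gT -> algC) (t : gT -> gT).
Local Notation L := (N <*> C)%G.

Hypotheses (PA : proj_repr_assoc K N theta n P alpha) (thetaI : theta \in irr N).
Hypotheses (k_gt0 : (0 < k)%N) (QU : {in K, forall x, Q x \in unitmx}).
Hypothesis Qfactor :
  {in K &, forall x y, beta x y != 0 /\ Q x *m Q y = beta x y *: Q (x * y)%g}.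
Hypotheses (QMr : {in K & C, forall x c, Q (x * c)%g = Q x *m X c})
  (QJ : {in K & C, forall x c, Q x *m X (c ^ x)%g = X c *m Q x}) (Q1 : Q 1%g = 1%:M).
Hypotheses (QN : {in N, forall a, Q a = (mx_scalar (Q a))%:M})
  (PC : {in C, forall c, P c = (mx_scalar (P c))%:M})
  (XCN : {in C :&: N, forall d, X d = (mx_scalar (P d))%:M}).
Hypotheses (cNC : C \subset 'C(N)) (sNK : N \subset K) (sCK : C \subset K).
Hypotheses (nNK : K \subset 'N(N)) (nCK : K \subset 'N(C)).
Hypothesis tauE : {in N & C, forall a c, tau (a * c)%g = theta a * \tr (X c)}.
Hypotheses (tK : {in K, forall x, t x \in K /\ ((t x)^-1 * x)%g \in L})
  (tMr : {in K & L, forall x l, t (x * l)%g = t x}) (t1 : t 1%g = 1%g).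

Let PU : {in K, forall x, P x \in unitmx}. Proof. by case: PA. Qed.
Let Pfactor : {in K &, forall x y,
  alpha x y != 0 /\ P x *m P y = alpha x y *: P (x * y)%g}.
Proof. by case: PA. Qed.
Let PN : mx_repr N P. Proof. by case: PA. Qed.
Let Ptr : {in N, forall a, \tr (P a) = theta a}. Proof. by case: PA. Qed.
Let PMN : {in K & N, forall x a, P (x * a)%g = P x *m P a /\ P (a * x)%g = P a *m P x}.
Proof. by case: PA. Qed.
Let n_gt0 : (0 < n)%N. Proof. exact: proj_repr_assoc_dim_gt0 PA thetaI. Qed.
Let LE : L :=: (N * C)%g. Proof. exact: cent_joinEr. Qed.
Let nLK : K \subset 'N(L). Proof. exact: normsY. Qed.

Lemma joinNC_mulP l : l \in L -> exists a c, [/\ a \in N, c \in C & l = (a * c)%g].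
Proof. by rewrite LE => /mulsgP[a c Na Cc ->]; exists a, c. Qed.

Lemma mx_scalar_P_neq0 c : c \in C -> mx_scalar (P c) != 0.
Proof. by move=> Cc; apply: (scalar_unitmx_neq0 n_gt0); rewrite -PC ?PU ?(subsetP sCK). Qed.

Lemma mx_scalar_Q_neq0 a : a \in N -> mx_scalar (Q a) != 0.
Proof. by move=> Na; apply: (scalar_unitmx_neq0 k_gt0); rewrite -QN ?QU ?(subsetP sNK). Qed.

(* P|_N (x) X on the central product L = N C: well defined since P and X are
   the same scalars on C :&: N. *)
Definition N_part l := repr (N :&: l *: C)%g.
Definition NC_repr l := P (N_part l) *t X ((N_part l)^-1 * l)%g.

Lemma NC_reprE a c : a \in N -> c \in C -> NC_repr (a * c)%g = P a *t X c.
Proof.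
move=> Na Cc; rewrite /NC_repr; set b := N_part _.
have /mem_repr : a \in (N :&: (a * c) *: C)%g by rewrite inE Na mem_lcoset invMg mulgKV groupV.
rewrite -/(N_part _) -/b inE mem_lcoset => /andP[Nb Cb'].
pose d := (a^-1 * b)%g; have Nd : d \in N by rewrite groupM ?groupV.
have Cd : d \in C.
  have -> : d = (c * ((a * c)^-1 * b))%g by rewrite invMg -mulgA mulKVg.
  exact: groupM.
have -> : b = (a * d)%g by rewrite mulKVg.
have -> : ((a * d)^-1 * (a * c) = d^-1 * c)%g by rewrite invMg -!mulgA mulKg.
have [_ PMa] := PN; rewrite PMa // repr_mxM ?groupV // (repr_mxV X Cd) XCN ?inE ?Cd //.
rewrite (PC Cd) invmx_scalar mul_mx_scalar mul_scalar_mx tensmxZl tensmxZr scalerA.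
by rewrite mx_scalar_id // mulfV ?scale1r ?mx_scalar_P_neq0.
Qed.

Lemma NC_reprM : {in L &, forall l l', NC_repr (l * l')%g = NC_repr l *m NC_repr l'}.
Proof.
move=> _ _ /joinNC_mulP[a [c [Na Cc ->]]] /joinNC_mulP[a' [c' [Na' Cc' ->]]].
have -> : (a * c * (a' * c') = (a * a') * (c * c'))%g.
  by rewrite -!mulgA; congr (_ * _)%g; rewrite !mulgA (centP (subsetP cNC c Cc)).
have [_ PMa] := PN.
by rewrite !NC_reprE ?groupM // tensmx_mul PMa // repr_mxM.
Qed.

Lemma NC_repr_tr : {in L, forall l, \tr (NC_repr l) = tau l}.
Proof.
by move=> _ /joinNC_mulP[a [c [Na Cc ->]]]; rewrite NC_reprE // mxtrace_tens Ptr // tauE.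
Qed.

Definition tensor_proj x := P x *t Q x.

Lemma tensor_proj_unit x : x \in K -> tensor_proj x \in unitmx.
Proof. by move=> Kx; rewrite tensmx_unit -?lt0n ?PU ?QU. Qed.

Lemma tensor_proj1 : tensor_proj 1%g = 1%:M.
Proof. by have [P1 _] := PN; rewrite /tensor_proj P1 Q1 tensmx_scalar mulr1. Qed.

Lemma tensor_projM : {in K &, forall x y,
  tensor_proj x *m tensor_proj y = (alpha x y * beta x y) *: tensor_proj (x * y)%g}.
Proof.
move=> x y Kx Ky; rewrite /tensor_proj tensmx_mul.
have [_ ->] := Pfactor Kx Ky; have [_ ->] := Qfactor Kx Ky.
by rewrite tensmxZl tensmxZr scalerA.
Qed.

Lemma tensor_projJ x l : x \in K -> l \in L ->
  tensor_proj x *m NC_repr (l ^ x)%g = NC_repr l *m tensor_proj x.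
Proof.
move=> Kx /joinNC_mulP[a [c [Na Cc ->]]].
have Nax : (a ^ x)%g \in N by rewrite memJ_norm ?(subsetP nNK).
rewrite conjMg !NC_reprE ?memJ_norm ?(subsetP nNK) ?(subsetP nCK) // /tensor_proj !tensmx_mul QJ //.
have [PxN _] := PMN Kx Nax; have [_ PNx] := PMN Kx Na.
by rewrite -PxN -PNx -conjgC.
Qed.

Lemma tensor_projNC a c : a \in N -> c \in C ->
  tensor_proj (a * c)%g = (mx_scalar (P c) * mx_scalar (Q a)) *: NC_repr (a * c)%g.
Proof.
move=> Na Cc; have [_ PNc] := PMN (subsetP sCK c Cc) Na.
rewrite /tensor_proj NC_reprE // PNc QMr ?(subsetP sNK) // (PC Cc) (QN Na).
by rewrite mul_mx_scalar mul_scalar_mx tensmxZl tensmxZr scalerA !mx_scalar_id.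
Qed.

Definition tensor_corrected x := tensor_proj (t x) *m NC_repr ((t x)^-1 * x)%g.
Definition tensor_correction x := mx_scalar (tensor_corrected x *m invmx (tensor_proj x)).

Lemma tensor_correctedE x a c : x \in K -> a \in N -> c \in C -> ((t x)^-1 * x = a * c)%g ->
  tensor_corrected x =
    (alpha (t x) (a * c)%g * beta (t x) (a * c)%g / (mx_scalar (P c) * mx_scalar (Q a)))
    *: tensor_proj x.
Proof.
move=> Kx Na Cc tx_ac; have [Ktx _] := tK Kx.
have Kac : (a * c)%g \in K := groupM (subsetP sNK a Na) (subsetP sCK c Cc).
have -> : tensor_proj x = tensor_proj (t x * (a * c))%g by rewrite -tx_ac mulKVg.
have PQ_neq0 : mx_scalar (P c) * mx_scalar (Q a) != 0.
  by rewrite mulf_neq0 ?mx_scalar_P_neq0 ?mx_scalar_Q_neq0.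
rewrite /tensor_corrected tx_ac -[NC_repr _](scalerK PQ_neq0) -tensor_projNC //.
by rewrite -scalemxAr tensor_projM // scalerA mulrC.
Qed.

Lemma tensor_correctionE x a c : x \in K -> a \in N -> c \in C -> ((t x)^-1 * x = a * c)%g ->
  tensor_correction x =
    alpha (t x) (a * c)%g * beta (t x) (a * c)%g / (mx_scalar (P c) * mx_scalar (Q a)).
Proof.
move=> Kx Na Cc tx_ac; rewrite /tensor_correction (tensor_correctedE Kx Na Cc tx_ac).
by rewrite -scalemxAl mulmxV ?tensor_proj_unit // scalemx1 mx_scalar_id // muln_gt0 n_gt0.
Qed.

Lemma tensor_corrected_scale x : x \in K ->
  tensor_corrected x = tensor_correction x *: tensor_proj x /\ tensor_correction x != 0.
Proof.
move=> Kx; have [Ktx /joinNC_mulP[a [c [Na Cc tx_ac]]]] := tK Kx.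
rewrite (tensor_correctedE Kx Na Cc tx_ac) (tensor_correctionE Kx Na Cc tx_ac); split=> //.
have Kac : (a * c)%g \in K by rewrite -tx_ac groupM ?groupV.
have [alpha_neq0 _] := Pfactor Ktx Kac; have [beta_neq0 _] := Qfactor Ktx Kac.
by rewrite !mulf_neq0 // invr_eq0 mulf_neq0 ?mx_scalar_P_neq0 ?mx_scalar_Q_neq0.
Qed.

Let t_L l : l \in L -> t l = 1%g.
Proof. by move=> Ll; rewrite -(mul1g l) tMr ?group1. Qed.

Lemma tensor_correctedL l : l \in L -> tensor_corrected l = NC_repr l.
Proof. by move=> Ll; rewrite /tensor_corrected t_L // tensor_proj1 mul1mx invg1 mul1g. Qed.

Lemma tensor_correctedMr x l : x \in K -> l \in L ->
  tensor_corrected (x * l)%g = tensor_corrected x *m tensor_corrected l.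
Proof.
move=> Kx Ll; have [_ Ltx'x] := tK Kx.
by rewrite (tensor_correctedL Ll) /tensor_corrected tMr // mulgA NC_reprM // mulmxA.
Qed.

Lemma tensor_correctedMl x l : x \in K -> l \in L ->
  tensor_corrected (l * x)%g = tensor_corrected l *m tensor_corrected x.
Proof.
move=> Kx Ll; have [Ktx Ltx'x] := tK Kx.
have Lltx : (l ^ t x)%g \in L by rewrite memJ_norm ?(subsetP nLK).
rewrite (tensor_correctedL Ll) /tensor_corrected conjgC tMr ?memJ_norm ?(subsetP nLK) //.
have -> : ((t x)^-1 * (x * l ^ x) = l ^ t x * ((t x)^-1 * x))%g.
  by rewrite -conjgC conjgE -!mulgA mulKVg.
by rewrite NC_reprM // mulmxA tensor_projJ // mulmxA.
Qed.

Lemma tensor_corrected_factor x y : x \in K -> y \in K ->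
  let gamma := tensor_correction x * tensor_correction y * (alpha x y * beta x y)
                / tensor_correction (x * y)%g in
  gamma != 0 /\
  tensor_corrected x *m tensor_corrected y = gamma *: tensor_corrected (x * y)%g.
Proof.
move=> Kx Ky /=; have Kxy : (x * y)%g \in K by rewrite groupM.
have [alpha_neq0 _] := Pfactor Kx Ky; have [beta_neq0 _] := Qfactor Kx Ky.
have [Rx mu_x] := tensor_corrected_scale Kx; have [Ry mu_y] := tensor_corrected_scale Ky.
have [Rxy mu_xy] := tensor_corrected_scale Kxy.
split.
  exact: mulf_neq0 (mulf_neq0 (mulf_neq0 mu_x mu_y) (mulf_neq0 alpha_neq0 beta_neq0))
                   (invr_neq0 mu_xy).
rewrite Rx Ry Rxy -scalemxAl -scalemxAr tensor_projM // !scalerA; congr (_ *: _).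
by rewrite mulfVK // mulrA.
Qed.

Lemma tensor_correction_exists : exists (R : gT -> 'M[algC]_(n * k)) (mu : gT -> algC),
  [/\ proj_repr_assoc K L tau (n * k) R
        (fun x y => mu x * mu y * (alpha x y * beta x y) / mu (x * y)%g),
      {in K, forall x, R x = mu x *: (P x *t Q x)} &
      forall x a c, x \in K -> a \in N -> c \in C -> ((t x)^-1 * x = a * c)%g ->
        mu x = alpha (t x) (a * c)%g * beta (t x) (a * c)%g
               / (mx_scalar (P c) * mx_scalar (Q a))].
Proof.
exists tensor_corrected, tensor_correction; split; last exact: tensor_correctionE.
- split.
  + move=> x Kx; have [-> mu_x] := tensor_corrected_scale Kx.
    by rewrite unitmxZ ?unitfE ?tensor_proj_unit.
  + exact: tensor_corrected_factor.
  + split=> [|l l' Ll Ll']; last by rewrite !tensor_correctedL ?groupM // NC_reprM.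
    have [P1 _] := PN.
    by rewrite tensor_correctedL // -(mulg1 1%g) NC_reprE // P1 repr_mx1 tensmx_scalar mulr1.
  + by move=> l Ll; rewrite tensor_correctedL // NC_repr_tr.
  + by move=> x l Kx Ll; rewrite tensor_correctedMr // tensor_correctedMl.
- by move=> x Kx; have [] := tensor_corrected_scale Kx.
Qed.

End TensorCorrection.

Section CentralProductTriples.
Variables (gT : finGroupType) (G N H M C : {group gT}).
Variables (theta : 'CF(N)) (phi : 'CF(M)) (n m : nat).
Variables (P : gT -> 'M[algC]_n) (P' : gT -> 'M[algC]_m) (alpha alpha' : gT -> gT -> algC).
Hypotheses (nsNG : N <| G) (thetaI : theta \in irr N) (sGI : G \subset 'I[theta]).
Hypotheses (nsMH : M <| H) (phiI : phi \in irr M) (sHI : H \subset 'I[phi]).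
Hypotheses (mulNH : (N * H)%g = G) (defM : M :=: N :&: H) (sCGH : 'C_G(N) \subset H).
Hypotheses (PA : proj_repr_assoc G N theta n P alpha) (PA' : proj_repr_assoc H M phi m P' alpha').
Hypothesis alphaE : forall x y, x \in H -> y \in H -> alpha x y = alpha' x y.
Hypothesis P_CGN : forall c, c \in 'C_G(N) -> exists z : algC, P c = z%:M /\ P' c = z%:M.
Hypothesis sCCGN : C \subset 'C_G(N).

Let n_gt0 : (0 < n)%N. Proof. exact: proj_repr_assoc_dim_gt0 PA thetaI. Qed.
Let sCG : C \subset G. Proof. exact: subset_trans sCCGN (subsetIl _ _). Qed.
Let cNC : C \subset 'C(N). Proof. exact: subset_trans sCCGN (subsetIr _ _). Qed.
Let sCH : C \subset H. Proof. exact: subset_trans sCCGN sCGH. Qed.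
Let sMN : M \subset N. Proof. by rewrite defM subsetIl. Qed.
Let sMH : M \subset H. Proof. by rewrite defM subsetIr. Qed.
Let sHG : H \subset G. Proof. by rewrite -mulNH mulG_subr. Qed.
Let cMC : C \subset 'C(M). Proof. exact: subset_trans cNC (centS sMN). Qed.
Let sCNM : C :&: N \subset M. Proof. by rewrite defM setIC setIS. Qed.

Lemma P_CGN_scalar c : c \in 'C_G(N) ->
  P c = (mx_scalar (P c))%:M /\ P' c = (mx_scalar (P c))%:M.
Proof. by move=> CGNc; have [z [-> ->]] := P_CGN CGNc; rewrite mx_scalar_id. Qed.

Lemma mx_scalar_P' c : c \in 'C_G(N) -> mx_scalar (P' c) = mx_scalar (P c).
Proof.
move=> CGNc; rewrite (P_CGN_scalar CGNc).2 mx_scalar_id //.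
exact: proj_repr_assoc_dim_gt0 PA' phiI.
Qed.

Variable nu : Iirr (C :&: N)%G.
Hypothesis theta_nu : irr_constt ('Res[(C :&: N)%G] theta) =i pred1 nu.

Lemma mx_scalar_P_nu : {in C :&: N, forall d, mx_scalar (P d) = 'chi_nu d}.
Proof.
have [_ _ PN Ptr _] := PA; pose rN := MxRepresentation PN.
have rN_theta : cfRepr rN = theta by apply/cfun_inP=> a Na; rewrite cfunE Na Ptr.
have [|j [Pj rN_j]] :=
  @scalar_repr_cfRes_constt _ _ _ _ rN (fun d => mx_scalar (P d)) (subsetIr C N) n_gt0.
  by move=> d /setIP[Cd _]; exact: (P_CGN_scalar (subsetP sCCGN d Cd)).1.
have := theta_nu j; rewrite -rN_theta rN_j !inE eqxx => /esym/eqP j_nu.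
by rewrite -j_nu.
Qed.

Lemma cfRes_phi : 'Res[(C :&: N)%G] phi = m%:R *: 'chi_nu.
Proof.
have [_ _ _ P'tr _] := PA'; apply/cfun_inP=> d CNd; have /setIP[Cd _] := CNd.
rewrite cfResE // -P'tr ?(subsetP sCNM) // (P_CGN_scalar (subsetP sCCGN d Cd)).2.
by rewrite mxtrace_scalar cfunE mx_scalar_P_nu // mulr_natl.
Qed.

Lemma cfRes_phi_constt : irr_constt ('Res[(C :&: N)%G] phi) =i pred1 nu.
Proof.
rewrite cfRes_phi; apply: constt_scale_irr.
by rewrite pnatr_eq0 -lt0n (proj_repr_assoc_dim_gt0 PA' phiI).
Qed.

Variables (psi : Iirr C) (tp : 'CF((N <*> C)%G)) (pp : 'CF((M <*> C)%G)).
Hypothesis psi_nu : nu \in irr_constt ('Res[(C :&: N)%G] 'chi_psi).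
Hypotheses (tpI : tp \in irr (N <*> C)%G)
  (tpE : forall a c, a \in N -> c \in C -> tp (a * c)%g = theta a * 'chi_psi c).
Hypotheses (ppI : pp \in irr (M <*> C)%G)
  (ppE : forall a c, a \in M -> c \in C -> pp (a * c)%g = phi a * 'chi_psi c).
Variables (k : nat) (X : mx_representation algC C k).
Hypotheses (Xchi : cfRepr X = 'chi_psi) (Xirr : mx_absolutely_irreducible X).

Local Notation K := ('I_('N_G(C))[tp])%G.
Local Notation K' := ('I_('N_H(C))[pp])%G.
Local Notation L := (N <*> C)%G.
Local Notation L' := (M <*> C)%G.

Let k_gt0 : (0 < k)%N. Proof. by case/mx_abs_irrP: Xirr. Qed.

Lemma X_CN : {in C :&: N, forall d, X d = (mx_scalar (P d))%:M}.
Proof.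
have X_CN_scalar : {in C :&: N, forall d, X d = (mx_scalar (X d))%:M}.
  move=> d /setIP[Cd Nd]; apply: (cent_repr_mx_scalar Xirr) => c Cc.
  by rewrite -!repr_mxM // (centP (subsetP cNC c Cc) d Nd).
have [j [Xj X_j]] := scalar_repr_cfRes_constt (subsetIl C N) k_gt0 X_CN_scalar.
move: psi_nu; rewrite -Xchi X_j inE => /eqP nu_j d CNd.
by rewrite X_CN_scalar // Xj // -nu_j mx_scalar_P_nu.
Qed.

Lemma K_inertia : K :=: G :&: 'I['chi_psi].
Proof.
apply: (inertia_central_product nsNG sGI) => //.
by case/irrP: thetaI => i ->; apply: irr1_neq0.
Qed.

Lemma K'_inertia : K' :=: H :&: 'I['chi_psi].
Proof.
apply: (inertia_central_product nsMH sHI) => //.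
by case/irrP: phiI => i ->; apply: irr1_neq0.
Qed.

Let sNI : N \subset 'I['chi_psi].
Proof. by apply: subset_trans (cent_sub_inertia _); rewrite centsC. Qed.
Let sK'K : K' \subset K. Proof. by rewrite K_inertia K'_inertia (setSI _ sHG). Qed.
Let sKG : K \subset G. Proof. by rewrite K_inertia subsetIl. Qed.
Let sK'H : K' \subset H. Proof. by rewrite K'_inertia subsetIl. Qed.
Let sNK : N \subset K. Proof. by rewrite K_inertia subsetI normal_sub. Qed.
Let sMK' : M \subset K'.
Proof. by rewrite K'_inertia subsetI sMH (subset_trans sMN). Qed.
Let sCK : C \subset K. Proof. by rewrite K_inertia subsetI sCG sub_inertia. Qed.
Let sCK' : C \subset K'. Proof. by rewrite K'_inertia subsetI sCH sub_inertia. Qed.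
Let nCK : K \subset 'N(C). Proof. by rewrite K_inertia subIset ?norm_inertia ?orbT. Qed.
Let nCK' : K' \subset 'N(C). Proof. exact: subset_trans sK'K nCK. Qed.
Let nNK : K \subset 'N(N). Proof. exact: subset_trans sKG (normal_norm nsNG). Qed.
Let nMK' : K' \subset 'N(M). Proof. exact: subset_trans sK'H (normal_norm nsMH). Qed.
Let nLK : K \subset 'N(L). Proof. exact: normsY. Qed.
Let nL'K' : K' \subset 'N(L'). Proof. exact: normsY. Qed.
Let sLK : L \subset K. Proof. by rewrite join_subG sNK. Qed.
Let sL'K' : L' \subset K'. Proof. by rewrite join_subG sMK'. Qed.
Let LE : L :=: (N * C)%g. Proof. exact: cent_joinEr. Qed.
Let L'E : L' :=: (M * C)%g. Proof. exact: cent_joinEr. Qed.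
Let sL'L : L' \subset L.
Proof. by rewrite join_subG (subset_trans sMN (joing_subl _ _)) joing_subr. Qed.

Lemma mulLK' : (L * K')%g = K.
Proof.
apply/eqP; rewrite eqEsubset mulG_subG sLK sK'K /=.
apply/subsetP=> x; rewrite K_inertia => /setIP[]; rewrite -mulNH.
case/mulsgP=> a h Na Hh -> Iah; rewrite mem_mulg ?(subsetP (joing_subl _ _)) //.
by rewrite K'_inertia in_setI Hh -(mulKg a h) groupM // groupV (subsetP sNI).
Qed.

Lemma defL' : L' :=: L :&: K'.
Proof.
apply/eqP; rewrite eqEsubset subsetI sL'L sL'K'; apply/subsetP=> x /setIP[].
rewrite LE => /mulsgP[a c Na Cc ->] K'ac.
have Ha : a \in H by rewrite -(mulgK c a) (groupM (subsetP sK'H _ K'ac)) // groupV (subsetP sCH).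
by rewrite L'E mem_mulg // defM inE Na.
Qed.

Lemma centKL_sub_K' : 'C_K(L) \subset K'.
Proof.
apply/subsetP=> x /setIP[Kx cLx]; have Gx := subsetP sKG x Kx.
have cNx : x \in 'C(N) := subsetP (centS (joing_subl N C)) x cLx.
move: Kx; rewrite K_inertia K'_inertia !inE => /andP[_ ->].
by rewrite (subsetP sCGH) // inE Gx.
Qed.

Lemma char_triple_KL : char_triple K L tp.
Proof. by split; rewrite /normal ?sLK ?nLK ?subsetIr. Qed.

Lemma char_triple_K'L' : char_triple K' L' pp.
Proof. by split; rewrite /normal ?sL'K' ?nL'K' ?subsetIr. Qed.

Local Notation t := (lcoset_rep K' L).

Let sKK'L : K \subset (K' * L)%g.
Proof. by rewrite (normC (subset_trans sK'K nLK)) mulLK'. Qed.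

Let tK : {in K, forall x, t x \in K /\ ((t x)^-1 * x)%g \in L}.
Proof. by move=> x /(subsetP sKK'L)/lcoset_repP[/(subsetP sK'K)]. Qed.

Let tK' : {in K', forall x, t x \in K' /\ ((t x)^-1 * x)%g \in L'}.
Proof.
move=> x K'x; have [K'tx Ltx'x] := lcoset_repP (subsetP sKK'L x (subsetP sK'K x K'x)).
by split=> //; rewrite defL' in_setI Ltx'x groupM ?groupV.
Qed.

Let tMr : {in K & L, forall x l, t (x * l)%g = t x}.
Proof. by move=> x l _; apply: lcoset_repMr. Qed.

Let tMr' : {in K' & L', forall x l, t (x * l)%g = t x}.
Proof. by move=> x l _ /(subsetP sL'L); apply: lcoset_repMr. Qed.

Let sKI_X : K \subset 'I[cfRepr X]. Proof. by rewrite Xchi K_inertia subsetIr. Qed.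
Local Notation Q := (proj_ext sKI_X).

Let QU : {in K, forall x, Q x \in unitmx}.
Proof. by move=> x _; apply: proj_ext_unit. Qed.
Let Qfactor : {in K &, forall x y, proj_ext_factor sKI_X x y != 0 /\
  Q x *m Q y = proj_ext_factor sKI_X x y *: Q (x * y)%g}.
Proof. exact: proj_ext_factorP. Qed.
Let QMr : {in K & C, forall x c, Q (x * c)%g = Q x *m X c}.
Proof. by move=> x c _; apply: proj_extMr. Qed.
Let QJ : {in K & C, forall x c, Q x *m X (c ^ x)%g = X c *m Q x}.
Proof. exact: proj_extJ. Qed.
Let QN : {in N, forall a, Q a = (mx_scalar (Q a))%:M}.
Proof.
have cCN : N \subset 'C(C) by rewrite centsC.
by move=> a Na; apply: proj_ext_cent_scalar; rewrite ?(subsetP sNK) ?(subsetP cCN).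
Qed.

Let PC : {in C, forall c, P c = (mx_scalar (P c))%:M}.
Proof. by move=> c /(subsetP sCCGN)/P_CGN_scalar[]. Qed.
Let P'C : {in C, forall c, P' c = (mx_scalar (P' c))%:M}.
Proof. by move=> c /(subsetP sCCGN) CGNc; rewrite mx_scalar_P' //; case: (P_CGN_scalar CGNc). Qed.
Let XCM : {in C :&: M, forall d, X d = (mx_scalar (P' d))%:M}.
Proof.
move=> d /setIP[Cd Md]; rewrite mx_scalar_P' ?(subsetP sCCGN) // X_CN //.
by rewrite inE Cd (subsetP sMN).
Qed.

Let tpE_X : {in N & C, forall a c, tp (a * c)%g = theta a * \tr (X c)}.
Proof. by move=> a c Na Cc; rewrite tpE // -Xchi cfunE Cc. Qed.
Let ppE_X : {in M & C, forall a c, pp (a * c)%g = phi a * \tr (X c)}.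
Proof. by move=> a c Ma Cc; rewrite ppE // -Xchi cfunE Cc. Qed.

Lemma central_product_geq_c : triple_geq_c K L tp K' L' pp.
Proof.
have sK'K_mem := subsetP sK'K.
have [RG [muG [PAG RGE muGE]]] := tensor_correction_exists (proj_repr_assoc_sub PA sKG)
  thetaI k_gt0 QU Qfactor QMr QJ (proj_ext1 sKI_X) QN PC X_CN cNC sNK sCK nNK nCK
  tpE_X tK tMr (lcoset_rep1 K' L).
have [RH [muH [PAH RHE muHE]]] := tensor_correction_exists (proj_repr_assoc_sub PA' sK'H)
  phiI k_gt0 (sub_in1 sK'K_mem QU) (sub_in2 sK'K_mem Qfactor) (sub_in11 sK'K_mem (fun _ => id) QMr)
  (sub_in11 sK'K_mem (fun _ => id) QJ) (proj_ext1 sKI_X) (sub_in1 (subsetP sMN) QN) P'C XCM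
  cMC sMK' sCK' nMK' nCK' ppE_X tK' tMr' (lcoset_rep1 K' L).
have muGH : {in K', muG =1 muH}.
  move=> x K'x; have [K'tx] := tK' K'x; rewrite L'E => /mulsgP[a c Ma Cc tx_ac].
  have Hac : (a * c)%g \in H := groupM (subsetP sMH a Ma) (subsetP sCH c Cc).
  rewrite (muGE x a c) ?sK'K_mem ?(subsetP sMN) // (muHE x a c) //.
  rewrite (alphaE (subsetP sK'H _ K'tx) Hac).
  by rewrite mx_scalar_P' ?(subsetP sCCGN).
split; [exact: char_triple_KL | exact: char_triple_K'L' | exact: mulLK'
       | by split; [exact: defL' | exact: centKL_sub_K'] | ].
exists (n * k)%N, (m * k)%N, RG, RH; do 2!eexists.
split; [exact: PAG | exact: PAH | move=> x y K'x K'y | move=> c KLc].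
  by rewrite /= !muGH ?groupM // alphaE ?(subsetP sK'H).
have /setIP[Kc cLc] := KLc; have K'c := subsetP centKL_sub_K' c KLc.
have CGNc : c \in 'C_G(N) by rewrite inE (subsetP sKG) // (subsetP (centS (joing_subl N C))).
have cCc : c \in 'C(C) := subsetP (centS (joing_subr N C)) c cLc.
have [PGc P'Gc] := P_CGN_scalar CGNc; have Qc := proj_ext_cent_scalar Xirr sCK sKI_X Kc cCc.
set zP := mx_scalar (P c) in PGc P'Gc; set zQ := mx_scalar (Q c) in Qc.
exists (muG c * (zP * zQ)).
by rewrite RGE // RHE // -muGH // PGc P'Gc Qc !tensmx_scalar !scale_scalar_mx.
Qed.

End CentralProductTriples.

Unset Implicit Arguments.

Theorem lemma3p3 (gT : finGroupType) (G N H M C : {group gT})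
    (theta : 'CF(N)) (phi : 'CF(M)) (nu : Iirr (C :&: N)%G) :
  triple_geq_c G N theta H M phi ->
  C \subset 'C_G(N) ->
  (* nu is the unique irreducible constituent of theta_{C cap N} *)
  irr_constt ('Res[(C :&: N)%G] theta) =i pred1 nu ->
  (* ... which is also the unique irreducible constituent of phi_{C cap N} *)
  irr_constt ('Res[(C :&: N)%G] phi) =i pred1 nu /\
  (forall (psi : Iirr C), nu \in irr_constt ('Res[(C :&: N)%G] 'chi_psi) ->
   forall (tp : 'CF((N <*> C)%G)) (pp : 'CF((M <*> C)%G)),
     tp \in irr (N <*> C)%G ->
     (forall n c, n \in N -> c \in C -> tp (n * c)%g = theta n * 'chi_psi c) ->
     pp \in irr (M <*> C)%G ->
     (forall m c, m \in M -> c \in C -> pp (m * c)%g = phi m * 'chi_psi c) ->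
     triple_geq_c ('I_('N_G(C))[tp])%G (N <*> C)%G tp
                  ('I_('N_H(C))[pp])%G (M <*> C)%G pp).
Proof.
move=> [[nsNG thetaI sGI] [nsMH phiI sHI] mulNH [defM sCGH]
        [n [m [P [P' [alpha [alpha' [PA PA' alphaE P_CGN]]]]]]]] sCCGN theta_nu.
split; first exact (cfRes_phi_constt thetaI phiI defM sCGH PA PA' P_CGN sCCGN theta_nu).
move=> psi psi_nu tp pp tpI tpE ppI ppE.
have [k [X [Xchi Xirr]]] : exists k (X : mx_representation algC C k),
    cfRepr X = 'chi_psi /\ mx_absolutely_irreducible X.
  by exists _, 'Chi_psi; split; [exact: irrRepr | exact/groupC/socle_irr].
exact (central_product_geq_c nsNG thetaI sGI nsMH phiI sHI mulNH defM sCGH PA PA'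
  alphaE P_CGN sCCGN theta_nu psi_nu tpI tpE ppI ppE Xchi Xirr).
Qed.
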